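(* Consider any class of quantum circuits whose allowed gates include the Hadamard gate and the controlled-not gate. Then, for each $n$, the following three statements are equivalent (where ''constant depth'' means depth bounded independently of $n$): (1) It is possible, in constant depth, to map the state $(\alpha|0\rangle+\beta|1\rangle)\otimes|0\rangle^{\otimes(n-1)}$ (one data qubit and $n-1$ work bits in state $|0\rangle$) onto the $n$-qubit cat state $\alpha|00\cdots0\rangle+\beta|11\cdots1\rangle$. (2) The $n$-ary fanout gate can be implemented in constant depth with at most $n-1$ additional work bits. (3) An $n$-ary parity gate can be implemented in constant depth with at most $n-1$ additional work bits.
   Context: The Hadamard gate is the one-qubit gate $H=\frac{1}{\sqrt2}\begin{pmatrix}1&1\\1&-1\end{pmatrix}$. The controlled-not gate maps $|x,y\rangle\mapsto|x,y\oplus x\rangle$ on basis states. The $n$-ary fanout gate is the product of $n$ controlled-not gates with a common control qubit: it maps basis states $|y_1,\ldots,y_n,x\rangle\mapsto|y_1\oplus x,\ldots,y_n\oplus x,x\rangle$. For a Boolean $m$-tuple, $\mathrm{Mod}_q(y_1,\ldots,y_m)=1$ iff $\sum_i y_i\not\equiv0\pmod q$; the quantum $\mathrm{MOD}_q$ gate maps $|y_1,\ldots,y_m,x\rangle\mapsto|y_1,\ldots,y_m,x\oplus\mathrm{Mod}_q(y_1,\ldots,y_m)\rangle$, and an $n$-ary parity gate is a $\mathrm{MOD}_2$ gate. Work bits are auxiliary qubits that start (and, for implementing a gate, end) in state $|0\rangle$. *)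

(* Scalars: an arbitrary numClosedFieldType C (e.g. the
   complex numbers), which provides conjugation and square roots. *)
From HB Require Import structures.
From mathcomp Require Import all_boot all_order all_algebra.
Set Implicit Arguments. Unset Strict Implicit. Unset Printing Implicit Defensive.
Import Order.TTheory GRing.Theory Num.Theory.
Local Open Scope ring_scope.

(* computational basis states of m qubits *)
Definition bits (m : nat) := {ffun 'I_m -> bool}.

Section Quantum.
Variable C : numClosedFieldType.

(* an operator on m qubits, by its matrix entries  <x| U |y> *)
Definition op (m : nat) := bits m -> bits m -> C.
(* an (unnormalised) state vector on m qubits *)
Definition state (m : nat) := bits m -> C.

Definition idop (m : nat) : op m := fun x y => (x == y)%:R.
Definition mulop (m : nat) (U V : op m) : op m :=
  fun x z => \sum_(y : bits m) U x y * V y z.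
Definition apply (m : nat) (U : op m) (psi : state m) : state m :=
  fun x => \sum_(y : bits m) U x y * psi y.
Definition adjoint (m : nat) (U : op m) : op m := fun x y => (U y x)^*.
Definition unitary (m : nat) (U : op m) : Prop :=
  forall x y, mulop (adjoint U) U x y = @idop m x y /\
              mulop U (adjoint U) x y = @idop m x y.

Definition ket (m : nat) (b : bits m) : state m := fun x => (x == b)%:R.

Definition hadamard : op 1 :=
  fun x y => (if x ord0 && y ord0 then -1 else 1) / sqrtC 2.
(* controlled-not: qubit 0 is the control, qubit 1 the target:
   |x,y> |-> |x, y xor x> *)
Definition cnot_map (y : bits 2) : bits 2 :=
  [ffun i => if i == ord_max then y ord_max (+) y ord0 else y i].
Definition cnot : op 2 := fun x y => (x == cnot_map y)%:R.

(* a gate U on k qubits placed on the wires w of an m-qubit register *)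
Record gate_app (m : nat) := GateApp {
  ga_k : nat;
  ga_U : op ga_k;
  ga_w : 'I_ga_k -> 'I_m }.

Definition ga_wires (m : nat) (g : gate_app m) : {set 'I_m} :=
  [set @ga_w m g j | j in 'I_(ga_k g)].

Definition embed (m : nat) (g : gate_app m) : op m :=
  fun x y =>
    if [forall i, (i \in ga_wires g) || (x i == y i)]
    then @ga_U m g [ffun j => x (@ga_w m g j)] [ffun j => y (@ga_w m g j)]
    else 0.

(* a layer: gates acting on pairwise disjoint sets of wires (depth one) *)
Definition layer (m : nat) := seq (gate_app m).
Definition layer_op (m : nat) (L : layer m) : op m :=
  foldr (fun g acc => mulop (embed g) acc) (@idop m) L.

(* a circuit: its list of layers, first layer applied first *)
Definition circuit (m : nat) := seq (layer m).
Definition circ_op (m : nat) (c : circuit m) : op m :=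
  foldr (fun L acc => mulop acc (layer_op L)) (@idop m) c.

Definition gate_class := forall k : nat, op k -> Prop.

Definition valid_layer (G : gate_class) (m : nat) (L : layer m) : Prop :=
  foldr (fun g P => (G (ga_k g) (@ga_U m g) /\ injective (@ga_w m g)) /\ P)
    True L /\
  pairwise (fun g h : gate_app m => [disjoint ga_wires g & ga_wires h]) L.

Definition valid_circuit (G : gate_class) (m : nat) (c : circuit m) : Prop :=
  foldr (fun L P => valid_layer G L /\ P) True c.

Definition depth_le (m : nat) (c : circuit m) (d : nat) : Prop := (size c <= d)%N.

Definition pad (n a : nat) (x : bits n) : bits (n + a) :=
  [ffun i => match split i with inl j => x j | inr _ => false end].

(* a classical reversible map f on n qubits implemented by c with a work bits *)
Definition implements (n a : nat) (c : circuit (n + a)) (f : bits n -> bits n)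
  : Prop :=
  forall x : bits n, apply (circ_op c) (ket (pad a x)) = ket (pad a (f x)).

(* n-ary fanout on n+1 qubits: y_1..y_n (wires 0..n-1), control x (wire n) *)
Definition fanout_map (n : nat) (x : bits n.+1) : bits n.+1 :=
  [ffun i => if i == ord_max then x i else x i (+) x ord_max].

(* n-ary parity (MOD_2) gate on n+1 qubits: inputs y_1..y_n, target x *)
Definition Mod_q (q n : nat) (x : bits n.+1) : bool :=
  (#|[set i : 'I_n.+1 | (i != ord_max) && x i]| %% q != 0)%N.
Definition parity_map (n : nat) (x : bits n.+1) : bits n.+1 :=
  [ffun i => if i == ord_max then x i (+) Mod_q 2 x else x i].

(* statement (1): cat state from one data qubit (wire 0) and n-1 work bits *)
Definition zeros (n : nat) : bits n := [ffun _ => false].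
Definition ones (n : nat) : bits n := [ffun _ => true].
Definition e0 (n : nat) : bits n := [ffun i => val i == 0%N].

Definition cat_in_depth (G : gate_class) (n d : nat) : Prop :=
  exists c : circuit n, valid_circuit G c /\ depth_le c d /\
    forall alpha beta : C,
      apply (circ_op c) (fun x => alpha * ket (zeros n) x + beta * ket (e0 n) x)
      = (fun x => alpha * ket (zeros n) x + beta * ket (ones n) x).

Definition fanout_in_depth (G : gate_class) (n d : nat) : Prop :=
  exists a, (a <= n - 1)%N /\ exists c : circuit (n.+1 + a),
    valid_circuit G c /\ depth_le c d /\ implements c (@fanout_map n).

Definition parity_in_depth (G : gate_class) (n d : nat) : Prop :=
  exists a, (a <= n - 1)%N /\ exists c : circuit (n.+1 + a),
    valid_circuit G c /\ depth_le c d /\ implements c (@parity_map n).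

End Quantum.

From Pilot Require Import Defs.
From mathcomp Require Import all_boot all_order all_algebra perm zify.
From Stdlib Require Import FunctionalExtensionality.
Set Implicit Arguments. Unset Strict Implicit. Unset Printing Implicit Defensive.
Import GRing.Theory Num.Theory.
Local Open Scope ring_scope.

(* Cat state => fanout: relabel the cat circuit so that its data qubit is the
   fanout control and its other wires are the n - 1 work bits; it copies the
   control onto n wires, one layer of CNOTs XORs these copies into the n
   targets, and the inverse circuit (the class is closed under adjoints)
   returns the copies to |0>.  Fanout => cat state: a fanout on m = n/2
   targets with at most m - 1 work bits fits on n wires and copies the data
   qubit onto m + 1 wires; one layer of CNOTs doubles this to n.
   Fanout <=> parity: both are linear permutations of (Z/2)^(n+1), each the
   transpose of the other, and conjugating a linear permutation by Hadamards
   on all data wires yields its inverse transpose. *)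

Section Circuits.
Variable C : numClosedFieldType.

Notation op := (op C).
Notation state := (state C).
Notation ket := (@ket C _).
Notation idop := (@idop C _).

Lemma op_ext m (A B : op m) : (forall x y, A x y = B x y) -> A = B.
Proof.
move=> AB; apply: functional_extensionality => x.
by apply: functional_extensionality => y; apply: AB.
Qed.

Lemma sum_delta_l m (x : bits m) (F : bits m -> C) :
  \sum_(y : bits m) (x == y)%:R * F y = F x.
Proof.
rewrite (bigD1 x) //= eqxx mul1r big1 ?addr0 // => y Hy.
by rewrite eq_sym (negbTE Hy) mul0r.
Qed.

Lemma sum_delta_r m (x : bits m) (F : bits m -> C) :
  \sum_(y : bits m) F y * (y == x)%:R = F x.
Proof.
rewrite -[RHS](sum_delta_l x); apply: eq_bigr => y _.
by rewrite mulrC eq_sym.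
Qed.

Lemma mulopA m (A B D : op m) : mulop (mulop A B) D = mulop A (mulop B D).
Proof.
apply: op_ext => x z; rewrite /mulop.
under eq_bigr do rewrite mulr_suml.
rewrite exchange_big /=; apply: eq_bigr => w _.
by rewrite mulr_sumr; apply: eq_bigr => y _; rewrite mulrA.
Qed.

Lemma mul1op m (A : op m) : mulop idop A = A.
Proof. by apply: op_ext => x z; rewrite /mulop /idop sum_delta_l. Qed.

Lemma mulop1 m (A : op m) : mulop A idop = A.
Proof.
apply: op_ext => x z; rewrite /mulop /idop -[RHS](sum_delta_r z (A x)).
by apply: eq_bigr => y _; rewrite eq_sym.
Qed.

Lemma apply_mulop m (A B : op m) psi :
  apply (mulop A B) psi = apply A (apply B psi).
Proof.
apply: functional_extensionality => x; rewrite /apply /mulop.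
under eq_bigr do rewrite mulr_suml.
rewrite exchange_big /=; apply: eq_bigr => w _.
by rewrite mulr_sumr; apply: eq_bigr => y _; rewrite mulrA.
Qed.

Lemma apply_idop m (psi : state m) : apply idop psi = psi.
Proof.
by apply: functional_extensionality => x; rewrite /apply /idop sum_delta_l.
Qed.

Lemma apply_ket m (A : op m) b : apply A (ket b) = fun x => A x b.
Proof. by apply: functional_extensionality => x; rewrite /apply sum_delta_r. Qed.

Lemma apply_lincomb m (A : op m) (al be : C) (p q : state m) :
  apply A (fun x => al * p x + be * q x) =
  fun x => al * apply A p x + be * apply A q x.
Proof.
apply: functional_extensionality => x; rewrite /apply.
rewrite !mulr_sumr -big_split /=; apply: eq_bigr => y _.
by rewrite mulrDr !mulrA [A x y * _]mulrC [A x y * be]mulrC.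
Qed.

Lemma apply_sum m (I : finType) (A : op m) (cf : I -> C) (p : I -> state m) :
  apply A (fun z => \sum_(y : I) cf y * p y z) =
  fun z => \sum_(y : I) cf y * apply A (p y) z.
Proof.
apply: functional_extensionality => x; rewrite /apply.
under eq_bigr do rewrite mulr_sumr.
rewrite exchange_big /=; apply: eq_bigr => y _.
by rewrite mulr_sumr; apply: eq_bigr => w _; rewrite mulrCA.
Qed.

Lemma adjoint_mulop m (A B : op m) :
  adjoint (mulop A B) = mulop (adjoint B) (adjoint A).
Proof.
apply: op_ext => x z; rewrite /adjoint /mulop rmorph_sum.
by apply: eq_bigr => y _; rewrite rmorphM mulrC.
Qed.

Lemma adjoint_idop m : adjoint (idop : op m) = idop.
Proof. by apply: op_ext => x z; rewrite /adjoint /idop conjC_nat eq_sym. Qed.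

Lemma layer_op_cat m (L1 L2 : layer C m) :
  layer_op (L1 ++ L2) = mulop (layer_op L1) (layer_op L2).
Proof.
elim: L1 => [|g L IH] /=; first by rewrite mul1op.
by rewrite IH mulopA.
Qed.

Lemma circ_op_cat m (c1 c2 : circuit C m) :
  circ_op (c1 ++ c2) = mulop (circ_op c2) (circ_op c1).
Proof.
elim: c1 => [|L c IH] /=; first by rewrite mulop1.
by rewrite IH mulopA.
Qed.

(** * Operators acting on a subset of the wires *)

Definition wires k m (f : 'I_k -> 'I_m) : {set 'I_m} := [set f j | j in 'I_k].

Definition agree_off m (S : {set 'I_m}) (x y : bits m) :=
  [forall i, (i \in S) || (x i == y i)].

Definition restrict k m (f : 'I_k -> 'I_m) (x : bits m) : bits k :=
  [ffun j => x (f j)].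

Definition overwrite k m (b : bits m) (f : 'I_k -> 'I_m) (v : bits k) : bits m :=
  [ffun i => if [pick j | f j == i] is Some j then v j else b i].

Definition lift_op k m (f : 'I_k -> 'I_m) (A : op k) : op m :=
  fun x y => if agree_off (wires f) x y then A (restrict f x) (restrict f y) else 0.

Lemma embedE m (g : gate_app C m) : embed g = lift_op (@ga_w C m g) (@ga_U C m g).
Proof. by []. Qed.

Lemma agree_offP m (S : {set 'I_m}) (x y : bits m) :
  reflect (forall i, i \notin S -> x i = y i) (agree_off S x y).
Proof.
apply: (iffP forallP) => H i.
  by move=> Hi; move: (H i); rewrite (negbTE Hi) => /eqP.
by case: (boolP (i \in S)) => //= Hi; rewrite H.
Qed.

Lemma agree_offxx m (S : {set 'I_m}) x : agree_off S x x.
Proof. exact/agree_offP. Qed.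

Lemma agree_offC m (S : {set 'I_m}) (x y : bits m) :
  agree_off S x y = agree_off S y x.
Proof. by apply/agree_offP/agree_offP => H i Hi; rewrite H. Qed.

Lemma agree_off_trans m (S : {set 'I_m}) (x y z : bits m) :
  agree_off S x y -> agree_off S y z -> agree_off S x z.
Proof.
by move=> /agree_offP H1 /agree_offP H2; apply/agree_offP => i Hi; rewrite H1 // H2.
Qed.

Lemma mem_wires k m (f : 'I_k -> 'I_m) j : f j \in wires f.
Proof. by apply/imsetP; exists j. Qed.

Lemma notin_wires k m (f : 'I_k -> 'I_m) i :
  (forall j, f j != i) -> i \notin wires f.
Proof. by move=> H; apply/imsetP => -[j _ Hj]; move: (H j); rewrite Hj eqxx. Qed.

Section InjectiveWires.
Variables (k m : nat) (f : 'I_k -> 'I_m).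
Hypothesis f_inj : injective f.

Lemma overwrite_in b v j : overwrite b f v (f j) = v j.
Proof.
rewrite /overwrite ffunE; case: pickP => [j' /eqP /f_inj -> //|/(_ j)].
by rewrite eqxx.
Qed.

Lemma overwrite_out b v i : i \notin wires f -> overwrite b f v i = b i.
Proof.
move=> Hi; rewrite /overwrite ffunE; case: pickP => [j /eqP Hj|//].
by move: Hi; rewrite -Hj mem_wires.
Qed.

Lemma restrict_overwrite b v : restrict f (overwrite b f v) = v.
Proof. by apply/ffunP => j; rewrite ffunE overwrite_in. Qed.

Lemma agree_off_overwrite b v : agree_off (wires f) (overwrite b f v) b.
Proof. by apply/agree_offP => i Hi; rewrite overwrite_out. Qed.

Lemma overwrite_restrict b y :
  agree_off (wires f) y b -> overwrite b f (restrict f y) = y.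
Proof.
move=> /agree_offP H; apply/ffunP => i.
case: (boolP (i \in wires f)) => Hi.
  by case/imsetP: Hi => j _ ->; rewrite overwrite_in ffunE.
by rewrite overwrite_out // H.
Qed.

Lemma eq_overwrite b v y :
  (y == overwrite b f v) = agree_off (wires f) y b && (restrict f y == v).
Proof.
apply/eqP/andP => [->|[H /eqP <-]]; last by rewrite overwrite_restrict.
by rewrite agree_off_overwrite restrict_overwrite.
Qed.

Lemma reindex_agree_off b (F : bits m -> C) :
  \sum_(y | agree_off (wires f) y b) F y = \sum_(v : bits k) F (overwrite b f v).
Proof.
rewrite (reindex_onto (overwrite b f) (restrict f)); last first.
  by move=> y; apply: overwrite_restrict.
by apply: eq_bigl => v; rewrite agree_off_overwrite restrict_overwrite eqxx.
Qed.

Lemma lift_opM (A B : op k) : lift_op f (mulop A B) = mulop (lift_op f A) (lift_op f B).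
Proof.
apply: op_ext => x z; rewrite /lift_op /mulop.
case: (boolP (agree_off (wires f) x z)) => Hxz; last first.
  apply/esym/big1 => y _.
  case: (boolP (agree_off (wires f) x y)) => Hxy; last by rewrite mul0r.
  case: (boolP (agree_off (wires f) y z)) => Hyz; last by rewrite mulr0.
  by move: Hxz; rewrite (agree_off_trans Hxy Hyz).
rewrite [RHS](bigID (fun y => agree_off (wires f) y x)) /=.
rewrite [X in _ = _ + X]big1 ?addr0 => [|y Hy]; last first.
  by rewrite agree_offC (negbTE Hy) mul0r.
rewrite reindex_agree_off; apply: eq_bigr => v _.
rewrite agree_offC agree_off_overwrite restrict_overwrite.
by rewrite (agree_off_trans (agree_off_overwrite _ _) Hxz).
Qed.

Lemma lift_op1 : lift_op f (idop : op k) = idop.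
Proof.
apply: op_ext => x y; rewrite /lift_op /Defs.idop.
case: (boolP (agree_off (wires f) x y)) => H.
  suff -> : (restrict f x == restrict f y) = (x == y) by [].
  apply/eqP/eqP => [E|-> //].
  by rewrite -(overwrite_restrict H) E overwrite_restrict // agree_offxx.
have /negbTE -> : x != y by apply: contraNneq H => ->; apply: agree_offxx.
by [].
Qed.

Lemma lift_op_ket (A : op k) b v :
  (forall y, A y (restrict f b) = (y == v)%:R) ->
  apply (lift_op f A) (ket b) = ket (overwrite b f v).
Proof.
move=> HA; rewrite apply_ket; apply: functional_extensionality => x.
by rewrite /lift_op /Defs.ket eq_overwrite; case: ifP.
Qed.

End InjectiveWires.

Lemma lift_op_adjoint k m (f : 'I_k -> 'I_m) (A : op k) :
  lift_op f (adjoint A) = adjoint (lift_op f A).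
Proof.
by apply: op_ext => x y; rewrite /lift_op /adjoint agree_offC; case: ifP; rewrite ?conjC0.
Qed.

Lemma lift_op_comp k l m (g : 'I_k -> 'I_l) (f : 'I_l -> 'I_m) (A : op k) :
  injective f -> lift_op f (lift_op g A) = lift_op (f \o g) A.
Proof.
move=> f_inj; apply: op_ext => x y; rewrite /lift_op.
have restrict_comp z : restrict g (restrict f z) = restrict (f \o g) z.
  by apply/ffunP => j; rewrite !ffunE.
rewrite !restrict_comp.
have <- : agree_off (wires f) x y && agree_off (wires g) (restrict f x) (restrict f y)
          = agree_off (wires (f \o g)) x y.
  apply/andP/agree_offP => [[/agree_offP H1 /agree_offP H2] i Hi|H].
    case: (boolP (i \in wires f)) => [/imsetP [j _ Ei]|Hf]; last by rewrite H1.
    rewrite Ei in Hi *; have := H2 j; rewrite !ffunE; apply.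
    by apply: contra Hi => /imsetP [j' _ ->]; rewrite (mem_wires (f \o g)).
  split; apply/agree_offP => i Hi.
    by apply: H; apply: contra Hi => /imsetP [j _ ->]; apply: mem_wires.
  rewrite !ffunE; apply: H; apply: contra Hi => /imsetP [j _ /= /f_inj ->].
  by rewrite mem_wires.
by case: (agree_off (wires f) x y).
Qed.

(** * Relabelling and inverting circuits *)

Lemma foldr_and_cat T (Q : T -> Prop) (s1 s2 : seq T) :
  foldr (fun g P => Q g /\ P) True (s1 ++ s2) <->
  foldr (fun g P => Q g /\ P) True s1 /\ foldr (fun g P => Q g /\ P) True s2.
Proof.
elim: s1 => [|g s IH] /=; first by split => // -[].
by move: IH; tauto.
Qed.

Lemma foldr_and_rev T (Q : T -> Prop) (s : seq T) :
  foldr (fun g P => Q g /\ P) True s -> foldr (fun g P => Q g /\ P) True (rev s).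
Proof.
elim: s => [|g s IH] //= [Hg Hs].
by rewrite rev_cons -cats1; apply/foldr_and_cat; split; [apply: IH|].
Qed.

Lemma foldr_and_map T U (Q : T -> Prop) (Q' : U -> Prop) (h : U -> T) (s : seq U) :
  (forall u, Q' u -> Q (h u)) ->
  foldr (fun g P => Q' g /\ P) True s -> foldr (fun g P => Q g /\ P) True (map h s).
Proof.
by move=> H; elim: s => [|g s IH] //= [Hg Hs]; split; [exact: H | exact: IH].
Qed.

Lemma pairwise_rev T (r : rel T) (s : seq T) :
  symmetric r -> pairwise r s -> pairwise r (rev s).
Proof.
move=> r_sym; elim: s => [|x s IH] //= /andP [Hx Hs].
rewrite rev_cons -cats1 pairwise_cat IH //= !andbT /allrel all_rev.
by apply: sub_all Hx => y /=; rewrite andbT r_sym.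
Qed.

Definition relabel_gate k m (f : 'I_k -> 'I_m) (g : gate_app C k) : gate_app C m :=
  GateApp (@ga_U C k g) (f \o @ga_w C k g).

Definition relabel k m (f : 'I_k -> 'I_m) (c : circuit C k) : circuit C m :=
  map (map (relabel_gate f)) c.

Section Relabel.
Variables (k m : nat) (f : 'I_k -> 'I_m).
Hypothesis f_inj : injective f.

Lemma layer_op_relabel L : layer_op (map (relabel_gate f) L) = lift_op f (layer_op L).
Proof.
elim: L => [|g L IH] /=; first by rewrite lift_op1.
by rewrite IH lift_opM // embedE [in RHS]embedE lift_op_comp.
Qed.

Lemma circ_op_relabel c : circ_op (relabel f c) = lift_op f (circ_op c).
Proof.
elim: c => [|L c IH] /=; first by rewrite lift_op1.
by rewrite IH layer_op_relabel lift_opM.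
Qed.

Lemma wires_comp l (w : 'I_l -> 'I_k) : wires (f \o w) = f @: wires w.
Proof. by rewrite /wires -imset_comp. Qed.

Lemma valid_relabel G c : valid_circuit G c -> valid_circuit G (relabel f c).
Proof.
apply: foldr_and_map => L [H1 H2]; split.
  by apply: foldr_and_map H1 => g [HG Hinj]; split => //=; apply: inj_comp.
rewrite pairwise_map; apply: sub_pairwise H2 => g h /= Hd.
rewrite /ga_wires /= -!/(wires _) !wires_comp -setI_eq0; apply/eqP/setP => i; rewrite !inE.
apply/negbTE/andP => -[/imsetP [j1 Hj1 ->] /imsetP [j2 Hj2 /f_inj E]].
by move: (disjointFr Hd Hj1); rewrite E Hj2.
Qed.

Lemma size_relabel c : size (relabel f c) = size c.
Proof. exact: size_map. Qed.

End Relabel.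

Definition inverse_gate m (g : gate_app C m) : gate_app C m :=
  GateApp (adjoint (@ga_U C m g)) (@ga_w C m g).

Definition inverse_layer m (L : layer C m) : layer C m := rev (map (@inverse_gate m) L).

Definition inverse m (c : circuit C m) : circuit C m :=
  rev (map (@inverse_layer m) c).

Lemma layer_op_inverse m (L : layer C m) :
  layer_op (inverse_layer L) = adjoint (layer_op L).
Proof.
elim: L => [|g L IH] /=; first by rewrite adjoint_idop.
rewrite /inverse_layer /= rev_cons -cats1 layer_op_cat -/(inverse_layer L) IH /=.
by rewrite mulop1 adjoint_mulop embedE lift_op_adjoint.
Qed.

Lemma circ_op_inverse m (c : circuit C m) : circ_op (inverse c) = adjoint (circ_op c).
Proof.
elim: c => [|L c IH] /=; first by rewrite adjoint_idop.
rewrite /inverse /= rev_cons -cats1 circ_op_cat -/(inverse c) IH /=.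
by rewrite mul1op layer_op_inverse adjoint_mulop.
Qed.

Lemma size_inverse m (c : circuit C m) : size (inverse c) = size c.
Proof. by rewrite /inverse size_rev size_map. Qed.

Section GateClass.
Variable G : gate_class C.
Arguments G : clear implicits.
Hypothesis G_unitary : forall k (U : op k), G k U -> unitary U.
Hypothesis G_adjoint : forall k (U : op k), G k U -> G k (adjoint U).

Lemma valid_inverse m (c : circuit C m) :
  valid_circuit G c -> valid_circuit G (inverse c).
Proof.
move=> Hc; apply: foldr_and_rev; move: Hc.
apply: foldr_and_map => L [H1 H2]; split.
  apply: foldr_and_rev; apply: foldr_and_map H1 => g [HG Hinj].
  by split => //=; apply: G_adjoint.
by apply: pairwise_rev; [move=> x y; rewrite disjoint_sym | rewrite pairwise_map].
Qed.

Lemma adjoint_circ_opK m (c : circuit C m) :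
  valid_circuit G c -> mulop (adjoint (circ_op c)) (circ_op c) = idop.
Proof.
have unitaryK k (U : op k) : unitary U -> mulop (adjoint U) U = idop.
  by move=> HU; apply: op_ext => x y; case: (HU x y).
elim: c => [|L c IH] /=; first by rewrite adjoint_idop mul1op.
move=> [[H1 _] Hc].
have HL : mulop (adjoint (layer_op L)) (layer_op L) = idop.
  elim: L H1 {Hc} => [|g L IHL] /=; first by rewrite adjoint_idop mul1op.
  move=> [[HG Hinj] HL].
  rewrite adjoint_mulop mulopA -(mulopA (adjoint (embed g))) embedE.
  rewrite -lift_op_adjoint -lift_opM // unitaryK; last exact: G_unitary.
  by rewrite lift_op1 // mul1op IHL.
by rewrite adjoint_mulop mulopA -(mulopA (adjoint (circ_op c))) IH // mul1op.
Qed.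

End GateClass.

Definition pair_wires m (c t : 'I_m) : 'I_2 -> 'I_m :=
  fun j => if val j == 0%N then c else t.

Definition cnot_at m (c t : 'I_m) : gate_app C m := GateApp (cnot C) (pair_wires c t).

Lemma pair_wires_inj m (c t : 'I_m) : c != t -> injective (pair_wires c t).
Proof.
move=> ct [[|[|i]] Hi] // [[|[|j]] Hj] //=; rewrite /pair_wires /=.
- by move=> _; apply: val_inj.
- by move=> E; move: ct; rewrite E eqxx.
- by move=> E; move: ct; rewrite E eqxx.
- by move=> _; apply: val_inj.
Qed.

Lemma apply_cnot_at m (c t : 'I_m) b : c != t ->
  apply (embed (cnot_at c t)) (ket b) =
  ket [ffun i => if i == t then b t (+) b c else b i].
Proof.
move=> ct; have w_inj := pair_wires_inj ct.
rewrite embedE (lift_op_ket w_inj (v := cnot_map (restrict (pair_wires c t) b))) //.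
congr ket; apply/ffunP => i; rewrite [RHS]ffunE.
have Hc := overwrite_in w_inj b (cnot_map (restrict (pair_wires c t) b)) ord0.
have Ht := overwrite_in w_inj b (cnot_map (restrict (pair_wires c t) b)) ord_max.
rewrite /= in Hc Ht.
have [->|Hit] := eqVneq i t; first by rewrite Ht !ffunE.
have [->|Hic] := eqVneq i c; first by rewrite Hc !ffunE.
rewrite overwrite_out //; apply: notin_wires => j; rewrite /pair_wires.
by case: ifP => _; rewrite eq_sym.
Qed.

Definition xor_into k m (cc tt : 'I_k -> 'I_m) (s : seq 'I_k) (b : bits m) (i : 'I_m) :=
  \big[addb/false]_(j <- s | tt j == i) b (cc j).

Lemma apply_cnot_layer k m (cc tt : 'I_k -> 'I_m) (s : seq 'I_k) b :
  (forall j j', cc j != tt j') ->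
  apply (layer_op (map (fun j => cnot_at (cc j) (tt j)) s)) (ket b) =
  ket [ffun i => b i (+) xor_into cc tt s b i].
Proof.
move=> Hct; elim: s => [|j0 s IH] /=.
  by rewrite apply_idop; congr ket; apply/ffunP => i; rewrite ffunE /xor_into big_nil addbF.
rewrite apply_mulop IH apply_cnot_at //; congr ket; apply/ffunP => i.
rewrite !ffunE /xor_into big_cons.
have -> : \big[addb/false]_(j <- s | tt j == cc j0) b (cc j) = false.
  by apply: big_pred0 => j; rewrite eq_sym (negbTE (Hct _ _)).
have [->|//] := eqVneq i (tt j0).
case: (b (tt j0)); case: (b (cc j0));
by case: (\big[addb/false]_(j <- s | tt j == tt j0) b (cc j)).
Qed.

Lemma xor_into_target k m (cc tt : 'I_k -> 'I_m) b j0 :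
  injective tt -> xor_into cc tt (enum 'I_k) b (tt j0) = b (cc j0).
Proof.
move=> tt_inj; rewrite /xor_into big_enum_cond /= (big_pred1 j0) // => j.
by rewrite inE; apply/eqP/eqP => [/tt_inj|->].
Qed.

Lemma xor_into_nontarget k m (cc tt : 'I_k -> 'I_m) s b i :
  (forall j, tt j != i) -> xor_into cc tt s b i = false.
Proof. by move=> H; apply: big_pred0 => j; apply/negbTE. Qed.

Lemma valid_cnot_layer (G : gate_class C) k m (cc tt : 'I_k -> 'I_m) :
  G 2%N (cnot C) -> injective cc -> injective tt -> (forall j j', cc j != tt j') ->
  valid_layer G (map (fun j => cnot_at (cc j) (tt j)) (enum 'I_k)).
Proof.
move=> GC cc_inj tt_inj Hct; split.
  by elim: (enum 'I_k) => [|j s IH] //=; do 2!split => //; apply: pair_wires_inj.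
rewrite pairwise_map; apply: (sub_pairwise (r := fun x y => x != y)); last first.
  by rewrite -uniq_pairwise enum_uniq.
move=> j j' /= Hjj'; rewrite -setI_eq0; apply/eqP/setP => i; rewrite !inE.
apply/negbTE/andP => -[/imsetP [u _ ->] /imsetP [u' _]].
rewrite /cnot_at /pair_wires /=; case: ifP => _; case: ifP => _ E.
- by move: Hjj'; rewrite (cc_inj _ _ E) eqxx.
- by move: (Hct j j'); rewrite E eqxx.
- by move: (Hct j' j); rewrite E eqxx.
- by move: Hjj'; rewrite (tt_inj _ _ E) eqxx.
Qed.

Definition sign (b : bool) : C := if b then -1 else 1.

Definition hcoef (a b : bool) : C := sign (a && b) / sqrtC 2.

Definition hadamard_at m (i : 'I_m) : gate_app C m :=
  GateApp (hadamard C) (fun _ : 'I_1 => i).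

Definition hadamards m (S : {set 'I_m}) : op m :=
  fun x y => if agree_off S x y then \prod_(i in S) hcoef (x i) (y i) else 0.

Lemma wires_const m (i : 'I_m) : wires (fun _ : 'I_1 => i) = [set i].
Proof.
by apply/setP => j; rewrite inE; apply/imsetP/eqP => [[u _ ->] //|->]; exists ord0.
Qed.

Lemma hadamards_set0 m : hadamards (set0 : {set 'I_m}) = idop.
Proof.
apply: op_ext => x y; rewrite /hadamards /Defs.idop big_set0.
have -> : agree_off set0 x y = (x == y).
  by apply/agree_offP/eqP => [H|-> //]; apply/ffunP => i; apply: H; rewrite inE.
by case: (x == y).
Qed.

Lemma hadamards_setU1 m (i : 'I_m) (S : {set 'I_m}) : i \notin S ->
  mulop (embed (hadamard_at i)) (hadamards S) = hadamards (i |: S).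
Proof.
move=> iS; apply: op_ext => x z; rewrite /mulop embedE /= /lift_op wires_const.
pose y0 : bits m := [ffun j => if j == i then z i else x j].
rewrite (bigD1 y0) //= big1 ?addr0 => [|y Hy]; last first.
  case: ifP => H1; last by rewrite mul0r.
  rewrite /hadamards; case: ifP => H2; last by rewrite mulr0.
  case/eqP: Hy; apply/ffunP => j; rewrite ffunE.
  case: ifP => [/eqP ->|/negbT Hj]; first by move/agree_offP: H2; apply.
  by move/agree_offP: H1 => -> //; rewrite inE.
have -> : agree_off [set i] x y0.
  by apply/agree_offP => j; rewrite inE ffunE => /negbTE ->.
rewrite /hadamards; have -> : agree_off S y0 z = agree_off (i |: S) x z.
  apply/agree_offP/agree_offP => H j; rewrite ?inE => Hj.
    move: Hj; rewrite negb_or => /andP [Hji HjS].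
    by rewrite -H // ffunE (negbTE Hji).
  rewrite ffunE; case: ifP => [/eqP -> // | Hji].
  by apply: H; rewrite !inE Hji.
case: ifP => _; last by rewrite mulr0.
rewrite big_setU1 //= /hadamard !ffunE eqxx; congr (_ * _).
apply: eq_bigr => j Hj; rewrite ffunE.
by case: ifP => // /eqP E; move: iS; rewrite -E Hj.
Qed.

Lemma layer_op_hadamards m (s : seq 'I_m) : uniq s ->
  layer_op (map (@hadamard_at m) s) = hadamards [set i in s].
Proof.
elim: s => [|i s IH] /=.
  by move=> _; rewrite -hadamards_set0; congr hadamards; apply/setP => i; rewrite !inE.
move=> /andP [Hi Hs]; rewrite IH // hadamards_setU1; last by rewrite inE.
by congr hadamards; apply/setP => j; rewrite !inE.
Qed.

Lemma valid_hadamard_layer (G : gate_class C) m (s : seq 'I_m) :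
  G 1%N (hadamard C) -> uniq s -> valid_layer G (map (@hadamard_at m) s).
Proof.
move=> GH us; split.
  by elim: s {us} => [|j s IH] //=; do 2!split => //; move=> u v _; rewrite !ord1.
rewrite pairwise_map; move: us; rewrite uniq_pairwise; apply: sub_pairwise.
move=> i j /= Hij; rewrite /ga_wires /= -!/(wires _) !wires_const.
by rewrite disjoints1 inE.
Qed.

(** * Hadamard conjugation of classical linear maps *)

Definition dotb k (u w : bits k) : bool := \big[addb/false]_j (u j && w j).

Lemma signD a b : sign (a (+) b) = sign a * sign b.
Proof. by case: a; case: b; rewrite /sign /= ?mulr1 ?mul1r ?mulrNN ?mulr1. Qed.

Lemma prod_sign k (F : 'I_k -> bool) :
  \prod_j sign (F j) = sign (\big[addb/false]_j F j).
Proof. by rewrite (big_morph sign signD (erefl (sign false))). Qed.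

Lemma prod_const_ord k (x : C) : \prod_(j < k) x = x ^+ k.
Proof. by rewrite -[in RHS](card_ord k) -prodr_const; apply: eq_bigl. Qed.

Lemma prod_hcoef k (u w : bits k) :
  \prod_(j < k) hcoef (u j) (w j) = sign (dotb u w) * (sqrtC 2)^-1 ^+ k.
Proof. by rewrite /hcoef big_split /= prod_sign prod_const_ord. Qed.

Lemma dotbC k (u w : bits k) : dotb u w = dotb w u.
Proof. by apply: eq_bigr => j _; rewrite andbC. Qed.

Lemma dotb_addr k (y x u : bits k) :
  dotb y x (+) dotb y u = dotb y [ffun j => x j (+) u j].
Proof.
rewrite /dotb -big_split /=; apply: eq_bigr => j _; rewrite ffunE.
by case: (y j); case: (x j); case: (u j).
Qed.

Lemma sum_sign_dotb k (w : bits k) :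
  \sum_(y : bits k) sign (dotb y w) = if w == zeros k then 2%:R ^+ k else 0.
Proof.
under eq_bigr do rewrite -prod_sign.
rewrite -(bigA_distr_bigA (fun j b => sign (b && w j))) /=.
under eq_bigr do rewrite big_bool /=.
case: eqP => [->|/eqP Hw].
  by rewrite -prod_const_ord; apply: eq_bigr => j _; rewrite /sign ffunE.
have [j Hj] : exists j, w j.
  apply/existsP; apply: contraR Hw => /existsPn H; apply/eqP/ffunP => j.
  by rewrite ffunE; apply/negbTE.
by rewrite (bigD1 j) //= Hj /sign addNr mul0r.
Qed.

Lemma hadamard_normalization k :
  (sqrtC (2 : C))^-1 ^+ k * (sqrtC (2 : C))^-1 ^+ k * 2%:R ^+ k = 1.
Proof.
have H2 : (2 : C) != 0 by rewrite pnatr_eq0.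
rewrite -!exprMn -invrM ?unitfE ?sqrtC_eq0 // -expr2 sqrtCK.
by rewrite mulVf // expr1n.
Qed.

(* The left-hand side is the (v, x) entry of H M H, for H the k-fold tensor
   power of the Hadamard gate and M read as a permutation matrix. *)
Lemma hadamard_conj_entry k (M N : bits k -> bits k) :
  (forall v y, dotb v (M y) = dotb (N v) y) -> involutive N ->
  forall x v : bits k,
  \sum_(y : bits k) (\prod_j hcoef (y j) (x j)) * (\prod_j hcoef (v j) (M y j)) =
  (v == N x)%:R.
Proof.
move=> dualMN N_inv x v.
under eq_bigr => y _ do
  rewrite !prod_hcoef dualMN (dotbC (N v)) mulrACA -signD dotb_addr.
rewrite -mulr_suml sum_sign_dotb.
have -> : ([ffun j => x j (+) N v j] == zeros k) = (v == N x).
  apply/eqP/eqP => [H|->]; last by apply/ffunP => j; rewrite !ffunE N_inv addbb.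
  suff -> : x = N v by rewrite N_inv.
  by apply/ffunP => j; move/ffunP: H => /(_ j); rewrite !ffunE; case: (x j); case: (N v j).
by case: (v == N x); rewrite ?mul0r // mulrC hadamard_normalization.
Qed.

Lemma big_addb_odd k (P : pred 'I_k) (b : 'I_k -> bool) :
  \big[addb/false]_(j | P j) b j = odd #|[set j | P j && b j]|.
Proof.
rewrite cardsE -sum1_card (big_morph odd (id1 := false) (op1 := addb)) //=.
  rewrite [RHS]big_mkcondr; apply: eq_bigr => j _; by case: (b j).
by move=> x y; rewrite oddD.
Qed.

Lemma Mod2E n (v : bits n.+1) :
  Mod_q 2 v = \big[addb/false]_(j | j != ord_max) v j.
Proof. by rewrite /Mod_q modn2 big_addb_odd; case: (odd _). Qed.

Lemma dotb_fanout n (v y : bits n.+1) :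
  dotb v (fanout_map y) = dotb (parity_map v) y.
Proof.
rewrite /dotb (bigD1 ord_max) // [in RHS](bigD1 ord_max) //= !ffunE eqxx Mod2E.
have -> : \big[addb/false]_(j | j != ord_max) (v j && fanout_map y j)
  = \big[addb/false]_(j | j != ord_max) (v j && y j) (+)
    (\big[addb/false]_(j | j != ord_max) v j && y ord_max).
  case Hy: (y ord_max).
  - rewrite andbT -big_split /=; apply: eq_bigr => j /negbTE Hj.
    by rewrite ffunE Hj Hy; case: (v j); case: (y j).
  - by rewrite andbF addbF; apply: eq_bigr => j /negbTE Hj; rewrite ffunE Hj Hy addbF.
have -> : \big[addb/false]_(j | j != ord_max) (parity_map v j && y j)
  = \big[addb/false]_(j | j != ord_max) (v j && y j).
  by apply: eq_bigr => j /negbTE Hj; rewrite ffunE Hj.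
case: (v ord_max); case: (y ord_max);
by case: (\big[addb/false]_(j | j != ord_max) (v j && y j));
   case: (\big[addb/false]_(j | j != ord_max) v j).
Qed.

Lemma dotb_parity n (v y : bits n.+1) :
  dotb v (parity_map y) = dotb (fanout_map v) y.
Proof. by rewrite dotbC -dotb_fanout dotbC. Qed.

Lemma Mod2_parity n (v : bits n.+1) : Mod_q 2 (parity_map v) = Mod_q 2 v.
Proof. by rewrite !Mod2E; apply: eq_bigr => j /negbTE Hj; rewrite ffunE Hj. Qed.

Lemma parity_mapK n : involutive (@parity_map n).
Proof.
move=> v; apply/ffunP => i; rewrite !ffunE Mod2_parity.
by case: (i == ord_max) => //; rewrite -addbA addbb addbF.
Qed.

Lemma fanout_mapK n : involutive (@fanout_map n).
Proof.
move=> v; apply/ffunP => i; rewrite !ffunE eqxx.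
by case: (i == ord_max) => //; rewrite -addbA addbb addbF.
Qed.

Section Pad.
Variables (n a : nat).
Notation data := (wires (@lshift n a)).

Lemma pad_lshift (x : bits n) j : pad a x (lshift a j) = x j.
Proof.
rewrite /pad ffunE; case: split_ordP => [j' /lshift_inj -> // | k' /eqP].
by rewrite eq_lrshift.
Qed.

Lemma pad_rshift (x : bits n) k : pad a x (rshift n k) = false.
Proof. by rewrite /pad ffunE; case: split_ordP => [j' /eqP | //]; rewrite eq_rlshift. Qed.

Lemma pad_lt (x : bits n) (i : 'I_(n + a)) (Hi : (i < n)%N) : pad a x i = x (Ordinal Hi).
Proof.
case: (split_ordP i) => [j E | k E]; subst i.
  by rewrite pad_lshift; congr (x _); apply: val_inj.
by exfalso; move: Hi; rewrite /= ltnNge leq_addr.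
Qed.

Lemma pad_ge (x : bits n) (i : 'I_(n + a)) : (n <= i)%N -> pad a x i = false.
Proof.
case: (split_ordP i) => [j E | k E]; subst i; last by rewrite pad_rshift.
by rewrite /= leqNgt ltn_ord.
Qed.

Lemma pad_overwrite (x y : bits n) : pad a y = overwrite (pad a x) (@lshift n a) y.
Proof.
apply/ffunP => i; case: (split_ordP i) => [j -> | k ->].
  by rewrite pad_lshift overwrite_in //; apply: lshift_inj.
rewrite pad_rshift overwrite_out ?pad_rshift //; apply: notin_wires => j.
by rewrite eq_lrshift.
Qed.

Lemma agree_off_pad (z : bits (n + a)) (u u' : bits n) :
  agree_off data z (pad a u) = agree_off data z (pad a u').
Proof.
suff H v v' : agree_off data z (pad a v) -> agree_off data z (pad a v').
  by apply/idP/idP; apply: H.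
move=> Hv; apply: (agree_off_trans Hv).
by rewrite (pad_overwrite v' v); apply: agree_off_overwrite.
Qed.

Lemma ket_pad (z : bits (n + a)) (u : bits n) :
  ket (pad a u) z = (agree_off data z (pad a u) && (restrict (@lshift n a) z == u))%:R.
Proof.
by rewrite /Defs.ket {1}(pad_overwrite u u) eq_overwrite //; apply: lshift_inj.
Qed.

Lemma hadamards_pad (z : bits (n + a)) (u : bits n) :
  hadamards data z (pad a u) =
  (agree_off data z (pad a u))%:R * \prod_j hcoef (restrict (@lshift n a) z j) (u j).
Proof.
rewrite /hadamards; case: ifP => _; rewrite ?mul0r // mul1r.
rewrite big_imset /=; last by move=> i j _ _; apply: lshift_inj.
by apply: eq_bigr => j _; rewrite pad_lshift ffunE.
Qed.

Lemma apply_hadamards_pad (x : bits n) :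
  apply (hadamards data) (ket (pad a x)) =
  fun z => \sum_(y : bits n) (\prod_j hcoef (y j) (x j)) * ket (pad a y) z.
Proof.
rewrite apply_ket; apply: functional_extensionality => z.
rewrite hadamards_pad.
transitivity ((agree_off data z (pad a x))%:R *
  \sum_(y : bits n) (\prod_j hcoef (y j) (x j)) * (y == restrict (@lshift n a) z)%:R).
  by rewrite sum_delta_r.
rewrite mulr_sumr; apply: eq_bigr => y _.
by rewrite ket_pad (agree_off_pad z y x) -mulnb natrM mulrCA [restrict _ _ == _]eq_sym.
Qed.

End Pad.

Lemma pad_zeros k a : pad a (zeros k) = zeros (k + a).
Proof. by apply/ffunP => i; rewrite !ffunE; case: split => j; rewrite ?ffunE. Qed.

Definition data_hadamards n a : layer C (n + a) :=
  map (@hadamard_at _) (map (@lshift n a) (enum 'I_n)).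

Lemma uniq_data_wires n a : uniq (map (@lshift n a) (enum 'I_n)).
Proof. by rewrite map_inj_uniq ?enum_uniq //; apply: lshift_inj. Qed.

Lemma layer_op_data_hadamards n a :
  layer_op (data_hadamards n a) = hadamards (wires (@lshift n a)).
Proof.
rewrite /data_hadamards layer_op_hadamards ?uniq_data_wires //.
congr hadamards; apply/setP => i; rewrite inE.
by apply/mapP/imsetP => -[j _ ->]; exists j; rewrite ?mem_enum.
Qed.

Lemma implements_hadamard_conj n a (c : circuit C (n + a)) (M N : bits n -> bits n) :
  (forall v y, dotb v (M y) = dotb (N v) y) -> involutive N ->
  implements c M -> implements ([:: data_hadamards n a] ++ c ++ [:: data_hadamards n a]) N.
Proof.
move=> dualMN N_inv Hc x.
rewrite !circ_op_cat /= !mul1op layer_op_data_hadamards !apply_mulop.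
rewrite apply_hadamards_pad apply_sum.
under [X in apply _ X]functional_extensionality do under eq_bigr do rewrite Hc.
rewrite apply_sum; apply: functional_extensionality => z.
under eq_bigr => y _ do rewrite apply_ket hadamards_pad (agree_off_pad z (M y) x) mulrCA.
rewrite -mulr_sumr (hadamard_conj_entry dualMN N_inv) ket_pad (agree_off_pad z (N x) x).
by rewrite -mulnb natrM.
Qed.

Section Constructions.
Variable G : gate_class C.
Arguments G : clear implicits.
Hypothesis G_unitary : forall k (U : op k), G k U -> unitary U.
Hypothesis G_adjoint : forall k (U : op k), G k U -> G k (adjoint U).
Hypothesis G_H : G 1%N (hadamard C).
Hypothesis G_CNOT : G 2%N (cnot C).

Definition implementable n d (f : bits n.+1 -> bits n.+1) : Prop :=
  exists a, (a <= n - 1)%N /\ exists c : circuit C (n.+1 + a),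
    valid_circuit G c /\ depth_le c d /\ implements c f.
Arguments implementable : clear implicits.

Lemma implementable_hadamard_conj n d (M N : bits n.+1 -> bits n.+1) :
  (forall v y, dotb v (M y) = dotb (N v) y) -> involutive N ->
  implementable n d M -> implementable n d.+2 N.
Proof.
move=> dualMN N_inv [a [Ha [c [Hv [Hd HM]]]]].
exists a; split => //; exists ([:: data_hadamards n.+1 a] ++ c ++ [:: data_hadamards n.+1 a]).
have HL : valid_layer G (data_hadamards n.+1 a).
  exact: valid_hadamard_layer (uniq_data_wires _ _).
split; first by apply/foldr_and_cat; split; last apply/foldr_and_cat.
split; first by rewrite /depth_le !size_cat addn1 add1n !ltnS.
exact: implements_hadamard_conj.
Qed.

Lemma parity_of_fanout n d : fanout_in_depth G n d -> parity_in_depth G n d.+2.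
Proof. exact: (implementable_hadamard_conj (@dotb_fanout n) (@parity_mapK n)). Qed.

Lemma fanout_of_parity n d : parity_in_depth G n d -> fanout_in_depth G n d.+2.
Proof. exact: (implementable_hadamard_conj (@dotb_parity n) (@fanout_mapK n)). Qed.

Section CatToFanout.
Variable n : nat.
Hypothesis n_gt0 : (0 < n)%N.
Notation wire := 'I_(n.+1 + (n - 1)).

Lemma copy_wire_subproof (j : 'I_n) : (n + j < n.+1 + (n - 1))%N.
Proof. by have := ltn_ord j; lia. Qed.

Lemma target_wire_subproof (j : 'I_n) : (j < n.+1 + (n - 1))%N.
Proof. by have := ltn_ord j; lia. Qed.

(* Cat wire j (data qubit j = 0, work bits j > 0) is fanout wire n + j; the
   fanout control is wire n and its targets are wires 0, ..., n - 1. *)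
Definition copy_wire j : wire := Ordinal (copy_wire_subproof j).
Definition target_wire j : wire := Ordinal (target_wire_subproof j).

Lemma copy_wire_inj : injective copy_wire.
Proof. by move=> i j /(congr1 val) /= /addnI /val_inj. Qed.

Lemma target_wire_inj : injective target_wire.
Proof. by move=> i j /(congr1 val) /= /val_inj. Qed.

Lemma copy_neq_target j j' : copy_wire j != target_wire j'.
Proof. by rewrite -val_eqE /=; have := ltn_ord j'; lia. Qed.

Definition with_copies (x : bits n.+1) : bits (n.+1 + (n - 1)) :=
  overwrite (pad (n - 1) x) copy_wire (if x ord_max then ones n else zeros n).

Definition copy_layer : layer C (n.+1 + (n - 1)) :=
  map (fun j => cnot_at (copy_wire j) (target_wire j)) (enum 'I_n).

Lemma restrict_copy_wire_pad (x : bits n.+1) :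
  restrict copy_wire (pad (n - 1) x) = if x ord_max then e0 n else zeros n.
Proof.
apply/ffunP => j; rewrite ffunE.
have [j0|j0] := eqVneq (val j) 0%N.
  have H : (copy_wire j < n.+1)%N by rewrite /= j0 addn0.
  rewrite (pad_lt _ H); have -> : Ordinal H = ord_max by apply: val_inj; rewrite /= j0 addn0.
  by case: (x ord_max); rewrite !ffunE ?j0.
rewrite pad_ge; last by rewrite /= -{1}[n]addn0 ltn_add2l lt0n.
by case: (x ord_max); rewrite !ffunE ?(negbTE j0).
Qed.

Lemma apply_copy_layer x :
  apply (layer_op copy_layer) (ket (with_copies x)) = ket (with_copies (fanout_map x)).
Proof.
rewrite apply_cnot_layer; last exact: copy_neq_target.
congr ket; apply/ffunP => i; rewrite ffunE.
have copy_bit j y : with_copies y (copy_wire j) = y ord_max.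
  by rewrite /with_copies overwrite_in; [case: (y ord_max); rewrite ffunE|apply: copy_wire_inj].
case: (ltnP i n) => Hi.
  have -> : i = target_wire (Ordinal Hi) by apply: val_inj.
  rewrite xor_into_target; last exact: target_wire_inj.
  rewrite !copy_bit /with_copies !overwrite_out; try by apply: notin_wires => j; exact: copy_neq_target.
  have H : (target_wire (Ordinal Hi) < n.+1)%N by rewrite /= ltnS ltnW.
  by rewrite !(pad_lt _ H) ffunE -val_eqE /= ltn_eqF.
rewrite xor_into_nontarget ?addbF; last first.
  by move=> j; rewrite -val_eqE /=; have := ltn_ord j; lia.
have Hj : (i - n < n)%N by have := ltn_ord i; lia.
have -> : i = copy_wire (Ordinal Hj) by apply: val_inj => /=; lia.
by rewrite !copy_bit ffunE eqxx.
Qed.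

Lemma cat_basis (c : circuit C n) :
  (forall alpha beta : C,
      apply (circ_op c) (fun x => alpha * ket (zeros n) x + beta * ket (e0 n) x)
      = (fun x => alpha * ket (zeros n) x + beta * ket (ones n) x)) ->
  (forall y, circ_op c y (zeros n) = (y == zeros n)%:R) /\
  (forall y, circ_op c y (e0 n) = (y == ones n)%:R).
Proof.
move=> Hcat; split => y.
  have := congr1 (fun f => f y) (Hcat 1 0).
  by rewrite apply_lincomb !apply_ket /= !mul1r !mul0r !addr0.
have := congr1 (fun f => f y) (Hcat 0 1).
by rewrite apply_lincomb !apply_ket /= !mul1r !mul0r !add0r.
Qed.

Lemma fanout_of_cat d : cat_in_depth G n d -> fanout_in_depth G n (d + (1 + d)).
Proof.
move=> [c [Hv [Hd Hcat]]]; have [Hz He] := cat_basis Hcat.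
set cc := relabel copy_wire c.
have Hvcc : valid_circuit G cc by apply: valid_relabel Hv; exact: copy_wire_inj.
have apply_cc y : apply (circ_op cc) (ket (pad (n - 1) y)) = ket (with_copies y).
  rewrite circ_op_relabel; last exact: copy_wire_inj.
  apply: lift_op_ket; first exact: copy_wire_inj.
  by move=> z; rewrite restrict_copy_wire_pad; case: (y ord_max).
exists (n - 1)%N; split => //; exists (cc ++ [:: copy_layer] ++ inverse cc); split.
  apply/foldr_and_cat; split => //; apply/foldr_and_cat; split; last exact: valid_inverse.
  split => //; apply: valid_cnot_layer => //.
  - exact: copy_wire_inj.
  - exact: target_wire_inj.
  - exact: copy_neq_target.
split; first by rewrite /depth_le !size_cat size_inverse size_relabel /= leq_add.
move=> x; rewrite !circ_op_cat /= mul1op circ_op_inverse !apply_mulop.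
by rewrite apply_cc apply_copy_layer -apply_cc -apply_mulop (adjoint_circ_opK G_unitary Hvcc) apply_idop.
Qed.

End CatToFanout.

Section FanoutToCat.
Variables (n m a : nat).
Hypothesis fits : (m.+1 + a <= n)%N.
Hypothesis doubles : (n <= m.+1 + m.+1)%N.
Notation fwire := 'I_(m.+1 + a).

(* The fanout control (wire m) becomes the data qubit of the cat state (wire 0). *)
Definition fanout_wire (i : fwire) : 'I_n :=
  widen_ord fits (tperm (lshift a ord0) (lshift a ord_max) i).

Lemma fanout_wire_inj : injective fanout_wire.
Proof. by move=> i j /(congr1 val) /= /val_inj /perm_inj. Qed.

Lemma fanout_wire_le i : (fanout_wire i <= m)%N = (i <= m)%N.
Proof. by rewrite /=; case: tpermP => [->|->|] //=; rewrite leqnn. Qed.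

Lemma restrict_fanout_wire_zeros : restrict fanout_wire (zeros n) = pad a (zeros m.+1).
Proof. by rewrite pad_zeros; apply/ffunP => i; rewrite !ffunE. Qed.

Definition control_bit : bits m.+1 := [ffun i => i == ord_max].

Lemma restrict_fanout_wire_e0 : restrict fanout_wire (e0 n) = pad a control_bit.
Proof.
apply/ffunP => j; rewrite !ffunE /=.
have -> : (val (tperm (lshift a ord0) (lshift a ord_max) j) == 0%N)
          = (tperm (lshift a ord0) (lshift a ord_max) j == lshift a ord0 :> fwire).
  by rewrite -val_eqE.
rewrite -[in X in _ == X](tpermR (lshift a ord0) (lshift a ord_max)) (inj_eq perm_inj).
case: (split_ordP j) => [i -> | k ->]; last by rewrite eq_rlshift.
by rewrite ffunE (inj_eq (@lshift_inj _ _)).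
Qed.

Lemma fanout_control_bit : fanout_map control_bit = ones m.+1.
Proof. by apply/ffunP => i; rewrite !ffunE eqxx addbT; case: (i == ord_max). Qed.

Definition half_cat : bits n := overwrite (e0 n) fanout_wire (pad a (ones m.+1)).

Lemma half_catE i : half_cat i = (i <= m)%N.
Proof.
have [Hi|Hi] := ltnP i (m.+1 + a).
  have [j ->] : exists j, i = fanout_wire j.
    by exists (tperm (lshift a ord0) (lshift a ord_max) (Ordinal Hi)); apply: val_inj; rewrite /= tpermK.
  rewrite overwrite_in ?fanout_wire_le; last exact: fanout_wire_inj.
  have [Hj|Hj] := ltnP j m.+1; first by rewrite (pad_lt _ Hj) ffunE -ltnS Hj.
  by rewrite pad_ge // leqNgt Hj.
rewrite overwrite_out; last first.
  by apply: notin_wires => j; rewrite -val_eqE /= neq_ltn (leq_trans (ltn_ord _) Hi).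
by rewrite ffunE /=; lia.
Qed.

Lemma dup_source_subproof (j : 'I_(n - m.+1)) : (j < n)%N.
Proof. by have := ltn_ord j; lia. Qed.

Lemma dup_target_subproof (j : 'I_(n - m.+1)) : (m.+1 + j < n)%N.
Proof. by have := ltn_ord j; lia. Qed.

Definition dup_source j : 'I_n := Ordinal (dup_source_subproof j).
Definition dup_target j : 'I_n := Ordinal (dup_target_subproof j).

Lemma dup_source_inj : injective dup_source.
Proof. by move=> i j /(congr1 val) /= /val_inj. Qed.

Lemma dup_target_inj : injective dup_target.
Proof. by move=> i j /(congr1 val) /= /addnI /val_inj. Qed.

Lemma dup_source_neq_target j j' : dup_source j != dup_target j'.
Proof. by rewrite -val_eqE /=; have := ltn_ord j; have := ltn_ord j'; lia. Qed.

Definition doubling_layer : layer C n :=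
  map (fun j => cnot_at (dup_source j) (dup_target j)) (enum 'I_(n - m.+1)).

Lemma apply_doubling_layer_zeros :
  apply (layer_op doubling_layer) (ket (zeros n)) = ket (zeros n).
Proof.
rewrite apply_cnot_layer; last exact: dup_source_neq_target.
by congr ket; apply/ffunP => i; rewrite !ffunE /xor_into big1 // => j _; rewrite ffunE.
Qed.

Lemma apply_doubling_layer_half_cat :
  apply (layer_op doubling_layer) (ket half_cat) = ket (ones n).
Proof.
rewrite apply_cnot_layer; last exact: dup_source_neq_target.
congr ket; apply/ffunP => i; rewrite [LHS]ffunE half_catE ffunE.
have [Hi|Hi] := leqP i m.
  rewrite xor_into_nontarget // => j; rewrite -val_eqE /=; lia.
have Hj : (i - m.+1 < n - m.+1)%N by have := ltn_ord i; lia.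
have -> : i = dup_target (Ordinal Hj) by apply: val_inj => /=; lia.
rewrite xor_into_target ?half_catE /=; last exact: dup_target_inj.
by apply/eqP; lia.
Qed.

Lemma cat_of_fanout d (c : circuit C (m.+1 + a)) :
  valid_circuit G c -> depth_le c d -> implements c (@fanout_map m) ->
  cat_in_depth G n d.+1.
Proof.
move=> Hv Hd Hc.
exists (relabel fanout_wire c ++ [:: doubling_layer]); split.
  apply/foldr_and_cat; split; first by apply: valid_relabel Hv; exact: fanout_wire_inj.
  split => //; apply: valid_cnot_layer => //.
  - exact: dup_source_inj.
  - exact: dup_target_inj.
  - exact: dup_source_neq_target.
split; first by rewrite /depth_le size_cat size_relabel addn1 ltnS.
have column y z : circ_op c z (pad a y) = (z == pad a (fanout_map y))%:R.
  by have := congr1 (fun f => f z) (Hc y); rewrite apply_ket.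
move=> al be; rewrite circ_op_cat /= mul1op circ_op_relabel; last exact: fanout_wire_inj.
rewrite apply_mulop !apply_lincomb.
rewrite (lift_op_ket fanout_wire_inj (v := pad a (fanout_map (zeros m.+1)))); last first.
  by move=> z; rewrite restrict_fanout_wire_zeros column.
rewrite (lift_op_ket fanout_wire_inj (v := pad a (fanout_map control_bit))); last first.
  by move=> z; rewrite restrict_fanout_wire_e0 column.
have -> : fanout_map (zeros m.+1) = zeros m.+1 by apply/ffunP => i; rewrite !ffunE; case: ifP.
have -> : overwrite (zeros n) fanout_wire (pad a (zeros m.+1)) = zeros n.
  by rewrite pad_zeros; apply/ffunP => i; rewrite !ffunE; case: pickP => *; rewrite ?ffunE.
by rewrite fanout_control_bit -/half_cat apply_doubling_layer_zeros apply_doubling_layer_half_cat.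
Qed.

End FanoutToCat.

Lemma cat_in_depth1 d : cat_in_depth G 1 d.
Proof.
exists [::]; split => //; split => // al be; rewrite /= apply_idop.
by have -> : e0 1 = ones 1 by apply/ffunP => i; rewrite !ffunE (ord1 i).
Qed.

Lemma cat_of_fanouts d :
  (forall m, (0 < m)%N -> fanout_in_depth G m d) ->
  forall n, (0 < n)%N -> cat_in_depth G n d.+1.
Proof.
move=> Hfan n n_gt0; have [->|n_neq1] := eqVneq n 1%N; first exact: cat_in_depth1.
have half_gt0 : (0 < n./2)%N by lia.
have [a [Ha [c [Hv [Hd Hc]]]]] := Hfan _ half_gt0.
by apply: (cat_of_fanout _ _ Hv Hd Hc); lia.
Qed.

End Constructions.

End Circuits.

Theorem mainTheorem1 (C : numClosedFieldType) (G : gate_class C)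
  (G_unitary : forall k (U : op C k), G k U -> unitary U)
  (G_adjoint : forall k (U : op C k), G k U -> G k (adjoint U))
  (G_H : G 1%N (hadamard C)) (G_CNOT : G 2%N (cnot C)) :
  ((exists d, forall n, (0 < n)%N -> cat_in_depth G n d) <->
   (exists d, forall n, (0 < n)%N -> fanout_in_depth G n d)) /\
  ((exists d, forall n, (0 < n)%N -> fanout_in_depth G n d) <->
   (exists d, forall n, (0 < n)%N -> parity_in_depth G n d)).
Proof.
split; split=> -[d Hd].
- exists (d + (1 + d))%N => n n_gt0.
  by apply: fanout_of_cat => //; apply: Hd.
- by exists d.+1; apply: cat_of_fanouts.
- by exists d.+2 => n n_gt0; apply: parity_of_fanout => //; apply: Hd.
- by exists d.+2 => n n_gt0; apply: fanout_of_parity => //; apply: Hd.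
Qed.
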